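(* Let $G\sim\mathcal{G}(n,p)$ with $n\cdot p\to 0$ as $n\to\infty$. Then the average complexity of best-first branch-and-bound with potentials for maximum independent set on $G$ is subexponential in $n$.
   Context: $\mathcal{G}(n,p)$ is the binomial random graph on $n$ vertices in which each of the $\binom{n}{2}$ pairs of vertices is an edge with probability $p$, independently. The branch-and-bound algorithm processes the vertices in a fixed order $v_1,\dots,v_n$; a node at level $i$ of the binary search tree corresponds to a partial solution $S\subseteq\{v_1,\dots,v_i\}$, with children $S\cup\{v_{i+1}\}$ and $S$, and has potential $u(S)=|S|+n-i$. Nodes whose partial solution is not independent are discarded; the algorithm always expands an unexplored node of largest potential; the first complete solution reached is returned and all other branches pruned. The average complexity is the expected number of nodes handled. *)

From HB Require Import structures.
From mathcomp Require Import all_boot all_order all_algebra.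
From mathcomp Require Import reals sequences exp.

Set Implicit Arguments.
Unset Strict Implicit.
Unset Printing Implicit Defensive.

Import Order.TTheory GRing.Theory Num.Theory.
Local Open Scope ring_scope.

(* Vertices of G(n,p): 'I_n, processed in the fixed order 0, 1, ..., n-1
   (i.e. v_{k+1} is the ordinal k).  A graph is a set of ordered pairs
   (u,v) with u < v, one per unordered edge {u,v}. *)
Definition pairs (n : nat) : {set 'I_n * 'I_n} :=
  [set e : 'I_n * 'I_n | (val e.1 < val e.2)%N].

Definition adj (n : nat) (E : {set 'I_n * 'I_n}) (u v : 'I_n) : bool :=
  ((u, v) \in E) || ((v, u) \in E).

Definition indep (n : nat) (E : {set 'I_n * 'I_n}) (S : {set 'I_n}) : bool :=
  [forall u in S, forall v in S, ~~ adj E u v].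

(* A node of the search tree at level i with partial solution S
   (S is a subset of {v_1,...,v_i} = ordinals < i). *)
Definition node (n : nat) : Type := (nat * {set 'I_n})%type.

Definition pot (n : nat) (x : node n) : nat := (#|x.2| + n - x.1)%N.

(* The vertex v_{i+1}, as a singleton set (empty if i >= n). *)
Definition vset (n : nat) (i : nat) : {set 'I_n} := [set v : 'I_n | val v == i].

(* A tie-breaking rule: given the list of unexplored (open) nodes, pick one.
   It is valid if, on a nonempty list, it returns an open node of largest
   potential. *)
Definition chooser := forall n : nat, {set 'I_n * 'I_n} -> seq (node n) -> node n.

Definition valid_chooser (ch : chooser) : Prop :=
  forall n (E : {set 'I_n * 'I_n}) (op : seq (node n)), op != [::] ->
    ch n E op \in op /\ forall y, y \in op -> (pot y <= pot (ch n E op))%N.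

(* State: (open nodes, number of nodes handled so far, finished?) *)
Definition bb_state (n : nat) : Type := (seq (node n) * nat * bool)%type.

Definition bb_step (ch : chooser) (n : nat) (E : {set 'I_n * 'I_n})
    (st : bb_state n) : bb_state n :=
  let: (op, c, dn) := st in
  if dn then st else
  if op is [::] then (op, c, true) else
  let x := ch n E op in
  if (n <= x.1)%N then (op, c, true) else
  let kids := [:: (x.1.+1, x.2 :|: vset n x.1); (x.1.+1, x.2)] in
  (rem x op ++ [seq y <- kids | indep E y.2], (c + 2)%N, false).

(* Number of nodes handled (root included).  The search tree has fewer than
   2^(n+1) nodes and every step expands a distinct node, so 2^(n+1) steps
   suffice for the search to terminate. *)
Definition bb_count (ch : chooser) (n : nat) (E : {set 'I_n * 'I_n}) : nat :=
  (iter (2 ^ n.+1) (bb_step ch E) ([:: (0%N, set0)], 1%N, false)).1.2.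

Definition avg_complexity (R : realType) (ch : chooser) (n : nat) (p : R) : R :=
  \sum_(E : {set 'I_n * 'I_n} | E \subset pairs n)
     p ^+ #|E| * (1 - p) ^+ (#|pairs n| - #|E|) * (bb_count ch E)%:R.

(* The vertices [v] with no later neighbour (the [sinks] of the graph) form an
   independent set with at least n - |E| elements, and its prefixes are partial
   solutions that are never discarded.  Hence some open node always has potential
   at least L = #|sinks E|, and best-first search only expands nodes of potential
   >= L.  For 0 < x <= 1, give a node with k levels left and potential q >= L the
   weight (k+1) (1+x)^k x^-(q-L): it exceeds 1 plus the weights of its two
   children, so the number of handled nodes is at most
   1 + 2 (n+1) (1+x)^n x^-|E|.  Averaging x^-|E| over G(n,p) gives
   (1 - p + p/x)^(n choose 2) <= exp(n^2 p / x); taking x small and using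
   n p -> 0 makes both exponential factors exp(o(n)). *)

From HB Require Import structures.
From mathcomp Require Import all_boot all_order all_algebra.
From mathcomp Require Import reals sequences exp.
From mathcomp Require Import ring lra zify.

Set Implicit Arguments.
Unset Strict Implicit.
Unset Printing Implicit Defensive.

Import Order.TTheory GRing.Theory Num.Theory.
Local Open Scope ring_scope.

Section SearchWeight.
Variables (R : realType) (x : R).

Definition search_weight (L k q : nat) : R :=
  if (L <= q)%N then k.+1%:R * (1 + x) ^+ k * x^-1 ^+ (q - L) else 0.

Lemma search_weight_ge0 L k q : 0 < x -> 0 <= search_weight L k q.
Proof.
move=> x_gt0; rewrite /search_weight; case: ifP => // _.
by rewrite !mulr_ge0 ?exprn_ge0 ?invr_ge0 ?ltW //; lra.
Qed.

Lemma search_weight_homo L k : 0 < x -> x <= 1 ->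
  {homo search_weight L k : q1 q2 / (q1 <= q2)%N >-> q1 <= q2}.
Proof.
move=> x_gt0 x_le1 q1 q2 le_q; rewrite /search_weight.
case: ifP => [le_Lq1|_]; last exact: search_weight_ge0.
rewrite (leq_trans le_Lq1 le_q) ler_wpM2l ?mulr_ge0 ?exprn_ge0 //; try lra.
by rewrite ler_weXn2l ?invf_ge1 ?leq_sub2r.
Qed.

Lemma search_weight_children L k q q1 : 0 < x -> x <= 1 ->
  (L <= q)%N -> (0 < q)%N -> (q1 <= q)%N ->
  1 + search_weight L k q1 + search_weight L k q.-1 <= search_weight L k.+1 q.
Proof.
move=> x_gt0 x_le1 le_Lq q_gt0 le_q1q.
set A := (1 + x) ^+ k; set Z := x^-1 ^+ (q - L).
have A_ge1 : 1 <= A by apply: exprn_ege1; lra.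
have Z_ge1 : 1 <= Z by apply: exprn_ege1; rewrite invf_ge1.
have AZ_ge1 : 1 <= A * Z by rewrite -(mulr1 1) ler_pM //; lra.
have k_ge0 : 0 <= k.+1%:R :> R by [].
have include_le : search_weight L k q1 <= k.+1%:R * A * Z.
  by have := search_weight_homo L k x_gt0 x_le1 le_q1q; rewrite {2}/search_weight le_Lq.
(* Excluding the next vertex lowers the potential by one, paid for by x^-1. *)
have exclude_le : search_weight L k q.-1 <= k.+1%:R * A * Z * x.
  rewrite /search_weight; case: ifP => [le_Lq1|_]; last first.
    by rewrite !mulr_ge0 //; lra.
  rewrite /Z (_ : (q - L = (q.-1 - L).+1)%N); last by lia.
  rewrite [X in _ <= X](_ : _ = k.+1%:R * A * x^-1 ^+ (q.-1 - L)) // exprS.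
  by field; exact: lt0r_neq0.
have -> : search_weight L k.+1 q = k.+2%:R * (A * (1 + x)) * Z.
  by rewrite /search_weight le_Lq exprSr.
rewrite -addn1 natrD; nra.
Qed.

End SearchWeight.

Lemma card_ord_geq n i : (#|[set v : 'I_n | (i <= v)%N]| <= n - i)%N.
Proof.
case: n => [|n]; first by rewrite sub0n (leq_trans (max_card _)) ?card_ord.
have := leq_imset_card (fun j : 'I_(n.+1 - i) => inord (i + j) : 'I_n.+1) setT.
rewrite cardsT card_ord; apply: leq_trans; apply/subset_leq_card/subsetP => v.
rewrite inE => le_iv; have lt_vi : (v - i < n.+1 - i)%N by have := ltn_ord v; lia.
apply/imsetP; exists (Ordinal lt_vi) => //; apply: val_inj.
by rewrite /= subnKC // inord_val.
Qed.

Lemma card_vset n i : (#|vset n i| <= 1)%N.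
Proof.
apply/card_le1_eqP => u v; rewrite !inE => /eqP u_i /eqP v_i.
by apply: val_inj; rewrite u_i v_i.
Qed.

Section Sinks.
Variables (n : nat) (E : {set 'I_n * 'I_n}).

Definition sinks : {set 'I_n} := [set v | [forall u, (v, u) \notin E]].

Lemma indep_sub_sinks (S : {set 'I_n}) : S \subset sinks -> indep E S.
Proof.
move=> /subsetP sub_S; apply/forall_inP => u uS; apply/forall_inP => v vS.
move: (sub_S u uS) (sub_S v vS); rewrite !inE => /forallP u_sink /forallP v_sink.
by rewrite /adj negb_or u_sink v_sink.
Qed.

Lemma card_sinks : (n - #|sinks| <= #|E|)%N.
Proof.
have sub_src : ~: sinks \subset [set e.1 | e in E].
  apply/subsetP => v; rewrite !inE => /forallPn [u]; rewrite negbK => vuE.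
  by apply/imsetP; exists (v, u).
rewrite -[X in (X - _)%N]card_ord -(cardsC sinks) addKn.
exact: leq_trans (subset_leq_card sub_src) (leq_imset_card _ _).
Qed.

Definition greedy_node (i : nat) : node n := (i, [set v in sinks | (v < i)%N]).

Lemma card_sinks_le_pot i : (i <= n)%N -> (#|sinks| <= pot (greedy_node i))%N.
Proof.
move=> le_in; rewrite /pot /= -addnBA //.
apply: leq_trans (leq_add (leqnn _) (card_ord_geq n i)).
apply: leq_trans (leq_card_setU _ _); apply/subset_leq_card/subsetP => v vS.
by move: vS; rewrite !inE => ->; case: ltnP.
Qed.

Definition children (y : node n) : seq (node n) :=
  [:: (y.1.+1, y.2 :|: vset n y.1); (y.1.+1, y.2)].

Lemma greedy_node_child i : (i < n)%N ->
  greedy_node i.+1 \in [seq y <- children (greedy_node i) | indep E y.2].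
Proof.
move=> lt_in; rewrite mem_filter indep_sub_sinks /=; last first.
  by apply/subsetP => v; rewrite inE => /andP[].
set vi := Ordinal lt_in; rewrite !inE /greedy_node.
case: (boolP (vi \in sinks)) => vi_sink; rewrite inE in vi_sink; apply/orP; [left|right].
all: apply/eqP; congr pair; apply/setP => v; rewrite !inE ltnS leq_eqVlt.
all: have [->|ne_v] := eqVneq v vi; first by rewrite eqxx ?(negbTE vi_sink) ?vi_sink ?orbT.
all: have -> : (val v == i) = false by apply: contraNF ne_v => /eqP v_i; apply/eqP/val_inj.
all: by rewrite ?orbF.
Qed.

End Sinks.

Section Invariant.
Variables (R : realType) (x : R) (n : nat) (E : {set 'I_n * 'I_n}).

Definition node_weight (y : node n) : R :=
  search_weight x #|sinks E| (n - y.1) (pot y).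

Definition open_weight (op : seq (node n)) : R := \sum_(y <- op) node_weight y.

Lemma open_weight_ge0 op : 0 < x -> 0 <= open_weight op.
Proof. by move=> x_gt0; apply: sumr_ge0 => y _; apply: search_weight_ge0. Qed.

Lemma open_weight_expand op y : 0 < x -> x <= 1 -> y \in op ->
  (y.1 < n)%N -> (#|sinks E| <= pot y)%N ->
  1 + open_weight (rem y op ++ [seq z <- children y | indep E z.2]) <= open_weight op.
Proof.
move=> x_gt0 x_le1 y_op lt_yn le_Ly.
set inc : node n := (y.1.+1, y.2 :|: vset n y.1); set exc : node n := (y.1.+1, y.2).
set kept := [seq z <- children y | indep E z.2].
have weight_ge0 z : 0 <= node_weight z by apply: search_weight_ge0.
have kept_le : open_weight kept <= node_weight inc + node_weight exc.
  have := weight_ge0 inc; have := weight_ge0 exc; rewrite /open_weight /kept /children /=.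
  by do 2 case: ifP => _; rewrite ?big_cons ?big_nil /=; lra.
have children_le : 1 + node_weight inc + node_weight exc <= node_weight y.
  have pot_inc : (pot inc <= pot y)%N.
    rewrite /pot /inc /=.
    have := (leq_card_setU y.2 (vset n y.1)).1; have := card_vset n y.1.
    (* lia would see differently elaborated copies of these terms as distinct atoms *)
    set a := #|_ :|: _|; set b := #|vset _ _|; set c := #|y.2|; set d := y.1.
    clearbody a b c d; lia.
  have pot_exc : pot exc = (pot y).-1 by rewrite /pot /exc /=; lia.
  rewrite /node_weight /= pot_exc (_ : (n - y.1 = (n - y.1.+1).+1)%N); last by lia.
  by apply: search_weight_children => //; rewrite /pot; lia.
have -> : open_weight op = node_weight y + open_weight (rem y op).
  by rewrite /open_weight (big_rem y).
rewrite /open_weight big_cat /= -!/(open_weight _); lra.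
Qed.

Definition bb_invariant (st : bb_state n) : Prop :=
  let: (op, c, finished) := st in
  c%:R + 2 * open_weight op <= 1 + 2 * search_weight x #|sinks E| n n /\
  (~~ finished -> exists2 i, (i <= n)%N & greedy_node E i \in op).

Lemma bb_step_stop ch op c : op != [::] -> (n <= (ch n E op).1)%N ->
  bb_step ch E (op, c, false) = (op, c, true).
Proof. by case: op => // y op' _ /= ->. Qed.

Lemma bb_step_expand ch op c : op != [::] -> ((ch n E op).1 < n)%N ->
  bb_step ch E (op, c, false) =
    (rem (ch n E op) op ++ [seq y <- children (ch n E op) | indep E y.2], (c + 2)%N, false).
Proof. by case: op => // y op' _ /=; rewrite ltnNge => /negbTE ->. Qed.

Lemma bb_invariant_step ch st : valid_chooser ch -> 0 < x -> x <= 1 ->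
  bb_invariant st -> bb_invariant (bb_step ch E st).
Proof.
move=> hch x_gt0 x_le1; case: st => [[op c] [//|]].
have [->|op_nil] := eqVneq op [::]; first by case.
move=> -[count_le /(_ isT) [i le_in greedy_open]].
have [chosen_open chosen_max] := hch n E op op_nil.
have [le_nz|lt_zn] := leqP n (ch n E op).1; first by rewrite bb_step_stop.
have le_Lz := leq_trans (card_sinks_le_pot E le_in) (chosen_max _ greedy_open).
rewrite bb_step_expand //; split.
  have := open_weight_expand x_gt0 x_le1 chosen_open lt_zn le_Lz.
  rewrite natrD; lra.
move=> _; have [greedy_chosen|greedy_other] := eqVneq (greedy_node E i) (ch n E op).
  have lt_in : (i < n)%N by rewrite -greedy_chosen in lt_zn.
  by exists i.+1 => //; rewrite mem_cat -greedy_chosen greedy_node_child ?orbT.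
by exists i => //; rewrite mem_cat rem_mem.
Qed.

Lemma bb_count_le ch : valid_chooser ch -> 0 < x -> x <= 1 ->
  (bb_count ch E)%:R <= 1 + 2 * (n.+1%:R * (1 + x) ^+ n * x^-1 ^+ #|E|).
Proof.
move=> hch x_gt0 x_le1.
have inv_iter k : bb_invariant (iter k (bb_step ch E) ([:: (0%N, set0)], 1%N, false)).
  elim: k => [|k IHk]; last exact: bb_invariant_step.
  rewrite /= /open_weight big_seq1 /node_weight /pot /= cards0 subn0; split; first lra.
  move=> _; exists 0%N => //; rewrite inE; apply/eqP; congr pair.
  by apply/setP => v; rewrite !inE ltn0 andbF.
rewrite /bb_count; have := inv_iter (2 ^ n.+1)%N.
case: (iter _ _ _) => [[op c] finished] [count_le _] /=.
have := open_weight_ge0 op x_gt0.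
have : search_weight x #|sinks E| n n <= n.+1%:R * (1 + x) ^+ n * x^-1 ^+ #|E|.
  rewrite /search_weight (leq_trans (max_card _)) ?card_ord //.
  rewrite ler_wpM2l ?ler_weXn2l ?invf_ge1 ?card_sinks //.
  by rewrite mulr_ge0 ?exprn_ge0 //; lra.
lra.
Qed.

End Invariant.

Lemma sum_subsets_card (V : nmodType) (T : finType) (P : {set T}) (f : nat -> V) :
  \sum_(A : {set T} | A \subset P) f #|A| = \sum_(k < #|P|.+1) f k *+ 'C(#|P|, k).
Proof.
rewrite (partition_big (fun A : {set T} => inord #|A| : 'I_#|P|.+1) xpredT) //=.
apply: eq_bigr => k _.
rewrite (eq_bigl (fun A => A \in [set A : {set T} | A \subset P & #|A| == k])); last first.
  move=> A; rewrite !inE; case: (boolP (A \subset P)) => //= sub_AP.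
  have lt_AP : (#|A| < #|P|.+1)%N by rewrite ltnS subset_leq_card.
  by apply/eqP/eqP => [<-|->]; [rewrite inordK | apply: val_inj; rewrite /= inordK].
rewrite (eq_bigr (fun _ => f k)); last by move=> A; rewrite inE => /andP[_ /eqP ->].
by rewrite sumr_const cards_draws.
Qed.

Lemma sum_subsets_binomial (R : comPzRingType) (T : finType) (P : {set T}) (p y : R) :
  \sum_(A : {set T} | A \subset P) p ^+ #|A| * (1 - p) ^+ (#|P| - #|A|) * y ^+ #|A| =
  (1 - p + p * y) ^+ #|P|.
Proof.
rewrite (sum_subsets_card _ (fun k => p ^+ k * (1 - p) ^+ (#|P| - k) * y ^+ k)) exprDn.
by apply: eq_bigr => k _; rewrite exprMn; congr (_ *+ _); ring.
Qed.

Lemma exprn_le_expR (R : realType) (t : R) k : 0 <= 1 + t -> (1 + t) ^+ k <= expR (k%:R * t).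
Proof.
by move=> t_ge; rewrite expRM_natl lerXn2r ?nnegrE ?expR_ge0 ?expR_ge1Dx.
Qed.

Lemma avg_complexity_le (R : realType) ch n (p x : R) :
  valid_chooser ch -> 0 <= p <= 1 -> 0 < x -> x <= 1 ->
  avg_complexity ch n p <= 1 + 2 * n.+1%:R * expR (n%:R * x + n%:R ^+ 2 * (p / x)).
Proof.
move=> hch /andP[p_ge0 p_le1] x_gt0 x_le1.
set w := fun A : {set 'I_n * 'I_n} => p ^+ #|A| * (1 - p) ^+ (#|pairs n| - #|A|).
set C := n.+1%:R * (1 + x) ^+ n; set B := 1 - p + p * x^-1.
have w_ge0 A : 0 <= w A by rewrite mulr_ge0 ?exprn_ge0 //; lra.
have avg_le : avg_complexity ch n p <= 1 + 2 * C * B ^+ #|pairs n|.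
  have count_le (A : {set 'I_n * 'I_n}) :
      w A * (bb_count ch A)%:R <= w A * (1 + 2 * (C * x^-1 ^+ #|A|)).
    by apply: ler_wpM2l => //; rewrite /C; apply: bb_count_le.
  apply: le_trans (ler_sum _ (fun A _ => count_le A)) _.
  have -> : \sum_(A : {set 'I_n * 'I_n} | A \subset pairs n) w A * (1 + 2 * (C * x^-1 ^+ #|A|))
      = \sum_(A : {set 'I_n * 'I_n} | A \subset pairs n) w A * 1 ^+ #|A| +
        2 * C * \sum_(A : {set 'I_n * 'I_n} | A \subset pairs n) w A * x^-1 ^+ #|A|.
    by rewrite mulr_sumr -big_split; apply: eq_bigr => A _ /=; rewrite expr1n; ring.
  by rewrite /w !sum_subsets_binomial mulr1 subrK expr1n.
have C_le : C <= n.+1%:R * expR (n%:R * x) by rewrite ler_wpM2l ?exprn_le_expR //; lra.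
have B_ge0 : 0 <= B by have := divr_ge0 p_ge0 (ltW x_gt0); rewrite /B; lra.
have B_le : B ^+ #|pairs n| <= expR (n%:R ^+ 2 * (p / x)).
  rewrite /B -addrA; apply: le_trans (exprn_le_expR _ _) _.
    by rewrite addrA.
  rewrite ler_expR; have K_le : (#|pairs n| <= n ^ 2)%N.
    by rewrite (leq_trans (max_card _)) // card_prod card_ord.
  apply: le_trans (_ : #|pairs n|%:R * (p / x) <= _).
    by rewrite ler_wpM2l // gerDr oppr_le0.
  apply: ler_wpM2r; first by rewrite divr_ge0 // ltW.
  by rewrite -natrX ler_nat.
have C_ge0 : 0 <= C by rewrite /C mulr_ge0 ?exprn_ge0 //; lra.
have := ler_pM C_ge0 (exprn_ge0 _ B_ge0) C_le B_le.
rewrite expRD; lra.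
Qed.

Lemma eventually_nat_le_expR (R : realType) (c : R) : 0 < c ->
  exists N, forall n, (N <= n)%N -> (2 * n + 3)%:R <= expR (c * n%:R).
Proof.
move=> c_gt0; set b := 8 / (c * c).
have b_ge0 : 0 <= b by rewrite divr_ge0 ?mulr_ge0 ?ltW.
exists (Num.Def.archi_bound b).+1 => n le_Nn.
have n_ge1 : 1 <= n%:R :> R by rewrite ler1n (leq_trans _ le_Nn).
have cn_ge8 : 8 <= c * c * n%:R.
  have lt_bn : b < n%:R by apply: lt_le_trans (archi_boundP b_ge0) _; rewrite ler_nat ltnW.
  by move: (ltW lt_bn); rewrite /b ler_pdivrMr ?mulr_gt0 // mulrC.
(* second-order Taylor bound: e^u >= 1 + u^2/2 *)
apply: le_trans (expR_ge1Dxn 1 (mulr_ge0 (ltW c_gt0) (ler0n R n))).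
rewrite natrD natrM /= expr2.
have -> : c * n%:R * (c * n%:R) / 2 = c * c * n%:R * n%:R / 2 by ring.
nra.
Qed.

Lemma eventually_affine_expR_le (R : realType) (eps : R) : 0 < eps ->
  exists N, forall n, (N <= n)%N ->
    1 + 2 * n.+1%:R * expR (eps * n%:R / 2) <= expR (eps * n%:R).
Proof.
move=> eps_gt0; have [|N hN] := @eventually_nat_le_expR _ (eps / 2); first by rewrite divr_gt0.
exists N => n /hN lin_le; rewrite (mulrAC eps).
set u := expR (eps / 2 * n%:R) in lin_le *.
have u_ge1 : 1 <= u.
  by apply: le_trans _ (expR_ge1Dx _); rewrite lerDl mulr_ge0 // divr_ge0 // ltW.
have -> : eps * n%:R = eps / 2 * n%:R + eps / 2 * n%:R by field.
rewrite expRD -/u; move: lin_le; rewrite -addn1 -addSn natrD natrM; nra.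
Qed.

Theorem theorem3 (R : realType) (p : nat -> R) (ch : chooser)
    (hch : valid_chooser ch)
    (hp : forall n, 0 <= p n <= 1)
    (hnp : forall d : R, 0 < d ->
       exists N, forall n, (N <= n)%N -> n%:R * p n <= d) :
  forall eps : R, 0 < eps ->
    exists N, forall n, (N <= n)%N ->
      avg_complexity ch n (p n) <= expR (eps * n%:R).
Proof.
move=> eps eps_gt0; set x := eps / (eps + 4).
have x_gt0 : 0 < x by rewrite divr_gt0 //; lra.
have x_le1 : x <= 1 by rewrite ler_pdivrMr; lra.
have x_le : x <= eps / 4.
  by rewrite ler_pdivrMr; [nra | lra].
have [|N1 np_small] := hnp (x * eps / 4); first by rewrite divr_gt0 // mulr_gt0.
have [N2 eventually_affine] := eventually_affine_expR_le eps_gt0.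
exists (maxn N1 N2) => n.
rewrite geq_max => /andP[/np_small np_le /eventually_affine affine_le].
apply: le_trans (avg_complexity_le n hch (hp n) x_gt0 x_le1) (le_trans _ affine_le).
rewrite lerD2l; apply: ler_wpM2l; first exact: mulr_ge0.
rewrite ler_expR.
have q_le : n%:R * p n / x <= eps / 4 by rewrite ler_pdivrMr //; lra.
rewrite (_ : n%:R ^+ 2 * (p n / x) = n%:R * (n%:R * p n / x)); last by rewrite expr2 !mulrA.
have n_ge0 : 0 <= n%:R :> R by [].
nra.
Qed.
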